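(* Let $X$ be a geodesic $\delta$--hyperbolic space ($\delta\geqslant 0$), let $g$ be an isometry of $X$ and let $x,y\in X$. If $m_1$ is the midpoint of a geodesic segment $[x,gx]$ and $m_2$ is the midpoint of a geodesic segment $[y,gy]$, then every geodesic segment $[m_1,m_2]$ is contained in $C_g^{+70\delta}$.
   Context: Distances are written $|x-y|$; Gromov product $(p,q)_x:=\frac12(|p-x|+|q-x|-|p-q|)$; $X$ is $\delta$--hyperbolic if $(p,r)_x\geqslant \min\{(p,q)_x,(q,r)_x\}-\delta$ for all $p,q,r,x$. For an isometry $g$, its translation length is $[g]:=\inf_{x\in X}|gx-x|$ and $C_g:=\{x\in X\mid |gx-x|\leqslant [g]+8\delta\}$. For $A\subset X$ and $a\geqslant 0$, $A^{+a}:=\{x\in X\mid d(x,A)\leqslant a\}$. *)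

From Stdlib Require Import Reals.
From Coquelicot Require Import Coquelicot.
Open Scope R_scope.

Record MetricSpace := {
  pt :> Type;
  dist : pt -> pt -> R;
  dist_nonneg : forall x y, 0 <= dist x y;
  dist_eq0 : forall x y, dist x y = 0 <-> x = y;
  dist_sym : forall x y, dist x y = dist y x;
  dist_tri : forall x y z, dist x z <= dist x y + dist y z
}.

Section Defs.
Variable X : MetricSpace.
Local Notation d := (dist X).

Definition gromov (p q x : X) : R := (d p x + d q x - d p q) / 2.

Definition hyperbolic (delta : R) : Prop :=
  forall p q r x : X,
    gromov p r x >= Rmin (gromov p q x) (gromov q r x) - delta.

Definition geodesic (x y : X) (gam : R -> X) : Prop :=
  gam 0 = x /\ gam (d x y) = y /\
  forall s t, 0 <= s <= d x y -> 0 <= t <= d x y -> d (gam s) (gam t) = Rabs (s - t).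

Definition segment (x y : X) (gam : R -> X) : X -> Prop :=
  fun z => exists t, 0 <= t <= d x y /\ z = gam t.

Definition midpoint (x y : X) (gam : R -> X) : X := gam (d x y / 2).

Definition geodesic_space : Prop :=
  forall x y : X, exists gam, geodesic x y gam.

Definition isometry (g : X -> X) : Prop :=
  (forall x y, d (g x) (g y) = d x y) /\ (forall y, exists x, g x = y).

Definition transl_len (g : X -> X) : R :=
  real (Glb_Rbar (fun r => exists x : X, r = d (g x) x)).

Definition C_set (delta : R) (g : X -> X) : X -> Prop :=
  fun x => d (g x) x <= transl_len g + 8 * delta.

(* A^{+a} := { x | d(x,A) <= a }, d(x,A) = inf_{z in A} |x - z| (= +oo if A empty) *)
Definition nbhd (A : X -> Prop) (a : R) : X -> Prop :=
  fun x => Rbar_le (Glb_Rbar (fun r => exists z, A z /\ r = d x z)) (Finite a).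

End Defs.

From Pilot Require Import Defs.
From Stdlib Require Import Reals Lra.
From Coquelicot Require Import Coquelicot.
Open Scope R_scope.

(* Write [disp u] for d(u, gu), [L = disp x] and [t = defect x] for the Gromov product
   (x, g²x)_{gx}.  If L > 2(t + δ), hyperbolicity makes the orbit of x grow
   linearly with rate L - 2(t + δ), so [g] >= L - 2t - 2δ.  A point p of
   [x, gx] whose distances to x and to gx are both at least min(L/2, t) is
   moved by at most L - 2 min(L/2, t) + 4δ, hence lies in C_g up to 6δ; this
   applies to the midpoints m1, m2.  Displacement is quasi-convex along
   geodesics, so every z in [m1, m2] has disp z <= [g] + 10δ.  The point at
   distance min(L/2, t) from z along [z, gz] is then in C_g, and comparing
   its displacement with that of z shows this distance is at most 7δ. *)

Lemma INR_mul_bounded_nonpos (e C : R) : (forall n, INR n * e <= C) -> e <= 0.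
Proof.
  intros Hbound.
  destruct (Rle_or_lt e 0) as [He | He]; [exact He |].
  destruct (INR_unbounded (C / e)) as [n Hn].
  pose proof (Hbound n) as Hn_bound.
  apply (Rmult_lt_compat_r e) in Hn; [| exact He].
  unfold Rdiv in Hn. rewrite Rmult_assoc, Rinv_l in Hn by lra.
  lra.
Qed.

Section Metric.
Variable X : MetricSpace.
Local Notation d := (Defs.dist X).

Definition between (p z q : X) : Prop := d p z + d z q = d p q.

Lemma dist_self (a : X) : d a a = 0.
Proof. apply Defs.dist_eq0. reflexivity. Qed.

Lemma gromov_nonneg (a b o : X) : 0 <= gromov X a b o.
Proof.
  unfold gromov.
  pose proof (Defs.dist_tri X a o b). pose proof (Defs.dist_sym X o b). lra.
Qed.

Lemma geodesic_point (a b : X) (c : R -> X) (s : R) :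
  geodesic X a b c -> 0 <= s <= d a b -> d a (c s) = s /\ between a (c s) b.
Proof.
  intros [Hc0 [Hc1 Hiso]] Hs.
  pose proof (Defs.dist_nonneg X a b).
  pose proof (Hiso 0 s ltac:(lra) Hs) as H0.
  pose proof (Hiso s (d a b) Hs ltac:(lra)) as H1.
  rewrite Hc0 in H0. rewrite Hc1 in H1.
  rewrite Rabs_minus_sym, Rminus_0_r, Rabs_pos_eq in H0 by lra.
  rewrite Rabs_minus_sym, Rabs_pos_eq in H1 by lra.
  unfold between. split; lra.
Qed.

Lemma nbhd_intro (A : X -> Prop) (a : R) (z w : X) :
  A w -> d z w <= a -> nbhd X A a z.
Proof.
  intros Aw Hzw. unfold nbhd.
  destruct (Glb_Rbar_correct (fun r => exists v, A v /\ r = d z v)) as [Hlb _].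
  eapply Rbar_le_trans; [apply Hlb; exists w; split; [exact Aw | reflexivity] |].
  exact Hzw.
Qed.

Lemma C_set_intro (delta : R) (g : X -> X) (w : X) :
  (forall u, d w (g w) <= d u (g u) + 8 * delta) -> C_set X delta g w.
Proof.
  intros Hw. unfold C_set, transl_len.
  set (S := fun r => exists u : X, r = d (g u) u).
  destruct (Glb_Rbar_correct S) as [Hlb Hglb].
  assert (Hup : Rbar_le (Glb_Rbar S) (d (g w) w)) by (apply Hlb; exists w; reflexivity).
  assert (Hlow : Rbar_le (d (g w) w - 8 * delta) (Glb_Rbar S)).
  { apply Hglb. intros r [u ->]. simpl. pose proof (Hw u).
    rewrite (Defs.dist_sym X (g w) w), (Defs.dist_sym X (g u) u). lra. }
  destruct (Glb_Rbar S); simpl in *; [lra | contradiction | contradiction].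
Qed.

End Metric.

Section Hyperbolic.
Variable X : MetricSpace.
Variable delta : R.
Hypothesis delta_nonneg : 0 <= delta.
Hypothesis hypX : hyperbolic X delta.
Local Notation d := (Defs.dist X).

Lemma hyperbolic_cases (p q r o : X) :
  gromov X p q o <= gromov X p r o + delta \/ gromov X q r o <= gromov X p r o + delta.
Proof.
  pose proof (hypX p q r o) as H. unfold Rmin in H.
  destruct (Rle_dec (gromov X p q o) (gromov X q r o)); [left | right]; lra.
Qed.

(* Since (p, q)_z = 0, one of (p, r)_z and (r, q)_z is at most δ. *)
Lemma between_dist_le (p z q r : X) : between X p z q ->
  d r z <= d r p - d p z + 2 * delta \/ d r z <= d r q - d z q + 2 * delta.
Proof.
  unfold between. intros Hz.
  pose proof (Defs.dist_sym X p z). pose proof (Defs.dist_sym X q z).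
  pose proof (Defs.dist_sym X r z). pose proof (Defs.dist_sym X p r).
  pose proof (Defs.dist_sym X r q).
  destruct (hyperbolic_cases p r q z) as [Hprq | Hprq]; unfold gromov in Hprq; [left | right]; lra.
Qed.

Lemma between_dist_le_gromov (o a b p q : X) (m : R) :
  between X o p a -> between X o q b ->
  m <= d o p -> m <= d o q -> m <= gromov X a b o ->
  d p q <= d o p + d o q - 2 * m + 4 * delta.
Proof.
  unfold between. intros Hp Hq Hmp Hmq Hmab.
  pose proof (Defs.dist_sym X p o). pose proof (Defs.dist_sym X a o).
  pose proof (Defs.dist_sym X q o). pose proof (Defs.dist_sym X b o).
  pose proof (Defs.dist_sym X b q). pose proof (Defs.dist_sym X a p).
  destruct (hyperbolic_cases p a q o) as [Hpaq | Hpaq];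
  destruct (hyperbolic_cases a b q o) as [Habq | Habq]; unfold gromov in *; lra.
Qed.

Section Isometry.
Variable g : X -> X.
Hypothesis g_dist : forall a b, d (g a) (g b) = d a b.

Local Notation disp u := (d u (g u)).
Local Notation defect x := (gromov X x (g (g x)) (g x)).

Lemma between_image (p z q : X) : between X p z q -> between X (g p) (g z) (g q).
Proof. unfold between. rewrite !g_dist. auto. Qed.

Lemma iter_dist (n : nat) (a b : X) : d (Nat.iter n g a) (Nat.iter n g b) = d a b.
Proof. induction n; simpl; [reflexivity | rewrite g_dist; exact IHn]. Qed.

Lemma disp_iter (n : nat) (a : X) : disp (Nat.iter n g a) = disp a.
Proof. induction n; simpl; [reflexivity | rewrite g_dist; exact IHn]. Qed.

Lemma defect_iter (n : nat) (a : X) : defect (Nat.iter n g a) = defect a.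
Proof.
  induction n; simpl; [reflexivity |].
  rewrite <- IHn. unfold gromov. rewrite !g_dist. reflexivity.
Qed.

Lemma iter_disp_le (n : nat) (u : X) : d u (Nat.iter n g u) <= INR n * disp u.
Proof.
  induction n as [| n IHn].
  - simpl. rewrite dist_self. lra.
  - rewrite S_INR.
    pose proof (Defs.dist_tri X u (Nat.iter n g u) (Nat.iter (S n) g u)).
    pose proof (disp_iter n u). simpl in *. lra.
Qed.

(* The first inequality always follows from the hypothesis on (x, gA)_A; the
   other branch of hyperbolicity at gA would force L <= 2(t + δ). *)
Lemma orbit_step (x A : X) :
  2 * (defect x + delta) < disp x -> disp A = disp x -> defect A = defect x ->
  gromov X x (g A) A <= defect x + delta ->
  d x A + disp x - 2 * (defect x + delta) <= d x (g A) /\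
  gromov X x (g (g A)) (g A) <= defect x + delta.
Proof.
  intros Hgrow HdispA HdefA Hgr.
  pose proof (Defs.dist_sym X (g A) A). pose proof (Defs.dist_sym X A x).
  pose proof (Defs.dist_sym X (g A) x). pose proof (Defs.dist_sym X (g (g A)) (g A)).
  pose proof (g_dist A (g A)).
  destruct (hyperbolic_cases A x (g (g A)) (g A)) as [Hhyp | Hhyp];
    rewrite HdefA in Hhyp; unfold gromov in *; split; lra.
Qed.

Lemma orbit_dist_ge (x : X) : 2 * (defect x + delta) < disp x -> forall n : nat,
  INR n * (disp x - 2 * (defect x + delta)) <= d x (Nat.iter n g x) /\
  gromov X x (g (Nat.iter n g x)) (Nat.iter n g x) <= defect x + delta.
Proof.
  intros Hgrow n. induction n as [| n [IH1 IH2]].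
  - assert (Hx : gromov X x (g x) x = 0).
    { unfold gromov. rewrite dist_self, (Defs.dist_sym X (g x) x). lra. }
    simpl. rewrite Hx, dist_self.
    pose proof (gromov_nonneg X x (g (g x)) (g x)). lra.
  - destruct (orbit_step x (Nat.iter n g x) Hgrow (disp_iter n x) (defect_iter n x) IH2)
      as [H1 H2].
    rewrite S_INR. simpl. split; lra.
Qed.

Lemma transl_ge_defect (x u : X) : disp x - 2 * (defect x + delta) <= disp u.
Proof.
  pose proof (Defs.dist_nonneg X u (g u)).
  destruct (Rle_or_lt (disp x) (2 * (defect x + delta))) as [Hle | Hgrow]; [lra |].
  enough (disp x - 2 * (defect x + delta) - disp u <= 0) by lra.
  apply (INR_mul_bounded_nonpos _ (2 * d x u)). intros n.
  destruct (orbit_dist_ge x Hgrow n) as [Hx _].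
  pose proof (Defs.dist_tri X x u (Nat.iter n g x)).
  pose proof (Defs.dist_tri X u (Nat.iter n g u) (Nat.iter n g x)).
  pose proof (iter_dist n u x). pose proof (iter_disp_le n u).
  pose proof (Defs.dist_sym X u x).
  lra.
Qed.

Lemma between_disp_le (x p : X) (m : R) : between X x p (g x) ->
  m <= d x p -> m <= d p (g x) -> m <= defect x -> disp p <= disp x - 2 * m + 4 * delta.
Proof.
  intros Hp Hmx Hmgx Hmt.
  assert (Hp' : between X (g x) p x).
  { unfold between in *. rewrite (Defs.dist_sym X (g x) p), (Defs.dist_sym X p x),
      (Defs.dist_sym X (g x) x). lra. }
  pose proof (between_dist_le_gromov (g x) x (g (g x)) p (g p) m Hp' (between_image _ _ _ Hp))
    as H.
  rewrite g_dist, (Defs.dist_sym X (g x) p) in H.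
  unfold between in Hp. lra.
Qed.

Lemma between_disp_le_transl (x p u : X) : between X x p (g x) ->
  Rmin (disp x / 2) (defect x) <= d x p -> Rmin (disp x / 2) (defect x) <= d p (g x) ->
  disp p <= disp u + 6 * delta.
Proof.
  intros Hp Hx Hgx.
  pose proof (between_disp_le x p _ Hp Hx Hgx (Rmin_r _ _)) as Hdisp.
  pose proof (transl_ge_defect x u). pose proof (Defs.dist_nonneg X u (g u)).
  revert Hdisp. unfold Rmin. destruct (Rle_dec (disp x / 2) (defect x)); lra.
Qed.

Lemma midpoint_disp_le (x u : X) (c : R -> X) : geodesic X x (g x) c ->
  disp (midpoint X x (g x) c) <= disp u + 6 * delta.
Proof.
  intros Hc. unfold midpoint.
  pose proof (Defs.dist_nonneg X x (g x)).
  destruct (geodesic_point X x (g x) c (disp x / 2) Hc ltac:(lra)) as [Hm Hbet].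
  apply (between_disp_le_transl x _ u Hbet); unfold between in Hbet;
    pose proof (Rmin_l (disp x / 2) (defect x)); lra.
Qed.

(* Three-point comparisons: hyperbolicity at z against gz, then at gz against
   p or q, on the image segment [gp, gq]. *)
Lemma between_disp_le_max (p z q : X) (M : R) : between X p z q ->
  disp p <= M -> disp q <= M -> disp z <= M + 4 * delta.
Proof.
  intros Hz Hp Hq.
  pose proof (between_image _ _ _ Hz) as Hgz.
  pose proof (Defs.dist_tri X p q (g q)). pose proof (Defs.dist_tri X q p (g p)).
  pose proof (Defs.dist_sym X (g z) z). pose proof (Defs.dist_sym X (g z) p).
  pose proof (Defs.dist_sym X (g z) q). pose proof (Defs.dist_sym X p q).
  pose proof (Defs.dist_nonneg X p z). pose proof (Defs.dist_nonneg X z q).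
  unfold between in Hz.
  destruct (between_dist_le p z q (g z) Hz) as [Hzp | Hzq].
  - destruct (between_dist_le _ _ _ p Hgz) as [Hp' | Hp']; rewrite !g_dist in Hp'; lra.
  - destruct (between_dist_le _ _ _ q Hgz) as [Hq' | Hq']; rewrite !g_dist in Hq'; lra.
Qed.

Lemma near_min_disp_point (z : X) (c : R -> X) : geodesic X z (g z) c ->
  (forall u, disp z <= disp u + 10 * delta) ->
  exists w, d z w <= 7 * delta /\ forall u, disp w <= disp u + 6 * delta.
Proof.
  intros Hc Hz.
  set (s := Rmin (disp z / 2) (defect z)).
  pose proof (Defs.dist_nonneg X z (g z)).
  assert (Hs : 0 <= s <= disp z / 2).
  { split; [apply Rmin_glb; [lra | apply gromov_nonneg] | apply Rmin_l]. }
  destruct (geodesic_point X z (g z) c s Hc ltac:(lra)) as [Hw Hbet].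
  assert (Hwgz : s <= d (c s) (g z)) by (unfold between in Hbet; lra).
  exists (c s). split.
  - pose proof (between_disp_le z (c s) s Hbet ltac:(lra) Hwgz (Rmin_r _ _)).
    pose proof (Hz (c s)). lra.
  - intros u. apply (between_disp_le_transl z _ u Hbet); fold s; lra.
Qed.

End Isometry.
End Hyperbolic.

Theorem lemma2p15 (X : MetricSpace) (delta : R) (g : X -> X) (x y : X)
  (gam1 gam2 : R -> X) :
  0 <= delta ->
  geodesic_space X ->
  hyperbolic X delta ->
  isometry X g ->
  geodesic X x (g x) gam1 ->
  geodesic X y (g y) gam2 ->
  forall gam : R -> X,
    geodesic X (midpoint X x (g x) gam1) (midpoint X y (g y) gam2) gam ->
    forall z : X,
      segment X (midpoint X x (g x) gam1) (midpoint X y (g y) gam2) gam z ->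
      nbhd X (C_set X delta g) (70 * delta) z.
Proof.
  intros Hd Hgeo Hh [Hg _] G1 G2 gam G z [s [Hs ->]].
  destruct (geodesic_point X _ _ gam s G Hs) as [_ Hbet].
  assert (Hz : forall u, Defs.dist X (gam s) (g (gam s)) <= Defs.dist X u (g u) + 10 * delta).
  { intros u.
    pose proof (between_disp_le_max X delta Hh g Hg _ _ _ (Defs.dist X u (g u) + 6 * delta)
      Hbet (midpoint_disp_le X delta Hd Hh g Hg x u gam1 G1)
      (midpoint_disp_le X delta Hd Hh g Hg y u gam2 G2)).
    lra. }
  destruct (Hgeo (gam s) (g (gam s))) as [c Hc].
  destruct (near_min_disp_point X delta Hd Hh g Hg _ c Hc Hz) as [w [Hzw Hw]].
  apply (nbhd_intro X _ _ _ w).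
  - apply C_set_intro. intros u. pose proof (Hw u). lra.
  - lra.
Qed.
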